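(* Let $X=X(G,C)$ be an oriented Cayley graph for a finite group $G$ of order $n>2$, with skew-symmetric adjacency matrix $A$. If there is a time $t$ such that all entries of $U(t)=\exp(-tA)$ have the same modulus (uniform mixing), then $n$ is an even perfect square.
   Context: For a finite group $G$ (multiplicative), $A_g$ is the permutation matrix with $(A_g)_{a,b}=1$ iff $ba^{-1}=g$, and $A_C=\sum_{g\in C}A_g$. An oriented Cayley graph $X(G,C)$ has $1\notin C$ and $C\cap C^{-1}=\emptyset$; its skew-symmetric adjacency matrix is $A=A_C-A_C^T$, with entry $1$ for arcs $a\to b$ ($ba^{-1}\in C$), $-1$ for reverse arcs, and $0$ otherwise. The continuous quantum walk on $X$ has transition matrix $U(t)=\exp(it(iA))=\exp(-tA)$. The group $G$ need not be abelian and $C$ need not be a union of conjugacy classes. *)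

From HB Require Import structures.
From mathcomp Require Import all_boot all_order all_algebra all_fingroup.
From mathcomp Require Import all_classical all_reals all_analysis.
Set Implicit Arguments.
Unset Strict Implicit.
Unset Printing Implicit Defensive.
Import Order.TTheory GRing.Theory Num.Theory.
Local Open Scope ring_scope.

Definition oriented_connection_set (gT : finGroupType) (C : {set gT}) : Prop :=
  (1%g \notin C) /\ [disjoint C & [set x^-1 | x in C]]%g.

(* Skew-symmetric adjacency matrix A = A_C - A_C^T, rows/columns indexed by
   the elements of gT (via enum_val).  (A_C)_{a,b} = 1 iff b a^{-1} \in C. *)
Definition skew_adj (R : realType) (gT : finGroupType) (C : {set gT})
  : 'M[R]_#|gT| :=
  \matrix_(i, j)
    (((enum_val j * (enum_val i)^-1)%g \in C)%:R
     - ((enum_val i * (enum_val j)^-1)%g \in C)%:R).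

Definition mxexp (R : realType) (n : nat) (M : 'M[R]_n) : 'M[R]_n :=
  \matrix_(i, j) limn (fun N : nat => \sum_(0 <= k < N) ((k`!%:R)^-1 * (M ^+ k) i j)).

(* Transition matrix U(t) = exp(it(iA)) = exp(-tA). *)
Definition transition (R : realType) (gT : finGroupType) (C : {set gT})
  (t : R) : 'M[R]_#|gT| :=
  mxexp ((- t) *: skew_adj R C).

Definition uniform_mixing_at (R : realType) (gT : finGroupType) (C : {set gT})
  (t : R) : Prop :=
  forall i j k l, `|transition C t i j| = `|transition C t k l|.

From mathcomp Require Import all_boot all_order all_algebra all_fingroup.
From mathcomp Require Import all_classical all_reals all_analysis.
From mathcomp Require Import ring.
Import Order.TTheory GRing.Theory Num.Theory.
Import numFieldNormedType.Exports.
Local Open Scope ring_scope.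
Local Open Scope classical_set_scope.

(* Since A^T = -A, U = exp(-tA) satisfies U U^T = exp(-tA) exp(tA) = 1, and
   since every row of A sums to 0 (left and right translation by a permute G),
   every row of U sums to 1.  If all |U i j| equal c, then n c^2 = 1; the
   inner product of two distinct rows is a vanishing sum of n terms +-c^2, so
   n is even; and a row sum is (p - q) c = 1 with p + q = n, so n = (p - q)^2.
   As exp is defined entrywise by its series, exp(M) exp(-M) = 1 is obtained
   from the Cauchy product of the truncated series, viewed as polynomials
   evaluated at M. *)

Lemma cvg_sum_fin {R : realType} {I : finType} {u : I -> nat -> R} {l : I -> R} :
  (forall i, u i @ \oo --> l i) -> (fun N => \sum_i u i N) @ \oo --> \sum_i l i.
Proof. by move=> ul; apply: (@cvg_big _ _ +%R 0 xpredT add_continuous). Qed.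

Section MatrixExponential.
Variable R : realType.

Definition mxnorm1 {n} (M : 'M[R]_n) : R := \sum_i \sum_j `|M i j|.

Lemma mxnorm1_ge0 n (M : 'M[R]_n) : 0 <= mxnorm1 M.
Proof. by apply: sumr_ge0 => i _; apply: sumr_ge0. Qed.

Lemma norm_mxexpr_le n (M : 'M[R]_n) k i j : `|(M ^+ k) i j| <= mxnorm1 M ^+ k.
Proof.
have row_le l : \sum_j' `|M l j'| <= mxnorm1 M.
  rewrite /mxnorm1 [leRHS](bigD1 l) //= lerDl.
  by apply: sumr_ge0 => x _; apply: sumr_ge0.
elim: k i j => [|k IHk] i j.
  by rewrite !expr0 mxE; case: (i == j); rewrite ?normr1 ?normr0.
rewrite exprS -mulmxE mxE exprS; apply: (le_trans (ler_norm_sum _ _ _)).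
apply: (@le_trans _ _ (\sum_l `|M i l| * mxnorm1 M ^+ k)).
  by apply: ler_sum => l _; rewrite normrM ler_wpM2l.
by rewrite -mulr_suml ler_wpM2r // exprn_ge0 // mxnorm1_ge0.
Qed.

Lemma is_cvg_mxexp_series n (M : 'M[R]_n) i j :
  cvgn (series (fun k => (k`!%:R)^-1 * (M ^+ k) i j)).
Proof.
apply: (@normed_cvg R R^o).
apply: (@series_le_cvg _ _ (exp_coeff (mxnorm1 M))).
- by move=> k; rewrite /= normr_ge0.
- by move=> k; apply/exp_coeff_ge0/mxnorm1_ge0.
- move=> k; rewrite /exp_coeff /= normrM mulrC [`|_^-1|]ger0_norm ?invr_ge0 //.
  by apply: ler_wpM2r; rewrite ?invr_ge0 // norm_mxexpr_le.
- exact: is_cvg_series_exp_coeff.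
Qed.

(* exp(x 'X) truncated at degree N: at 'X = M it is a partial sum of exp(x M). *)
Definition exp_poly N (x : R) : {poly R} := \poly_(k < N) (x ^+ k / k`!%:R).

Definition exp_poly_defect N (x y : R) : {poly R} :=
  exp_poly N x * exp_poly N y - exp_poly N (x + y).

Lemma coef_exp_polyM N (x y : R) p : (p < N)%N ->
  (exp_poly N x * exp_poly N y)`_p = (exp_poly N (x + y))`_p.
Proof.
move=> pN; rewrite coefM coef_poly pN addrC exprDn mulr_suml.
apply: eq_bigr => -[j /=]; rewrite ltnS => jp _.
have jN : (j < N)%N by apply: leq_ltn_trans pN.
rewrite !coef_poly jN (leq_ltn_trans (leq_subr _ _) pN).
rewrite -(bin_fact jp) !natrM mulr_natr.
have fact_neq0 m : (m`!%:R : R) != 0 by rewrite pnatr_eq0 -lt0n fact_gt0.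
have bin_neq0 : ('C(p, j)%:R : R) != 0 by rewrite pnatr_eq0 -lt0n bin_gt0.
by field; rewrite !fact_neq0 bin_neq0.
Qed.

Lemma coef_exp_poly_defect_small N (x y : R) p : (p < N)%N ->
  (exp_poly_defect N x y)`_p = 0.
Proof. by move=> pN; rewrite coefB coef_exp_polyM // subrr. Qed.

Lemma norm_coef_exp_poly N (x : R) k : `|(exp_poly N x)`_k| = (exp_poly N `|x|)`_k.
Proof.
rewrite !coef_poly; case: ifP => _; last by rewrite normr0.
by rewrite normrM normrX normfV normr_nat.
Qed.

Lemma norm_coef_exp_poly_defect_le N (x y : R) p :
  `|(exp_poly_defect N x y)`_p| <= (exp_poly_defect N `|x| `|y|)`_p.
Proof.
have [pN|Np] := ltnP p N; first by rewrite !coef_exp_poly_defect_small ?normr0.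
rewrite !coefB !(nth_default 0 (leq_trans (size_poly _ _) Np)) !subr0 !coefM.
apply: (le_trans (ler_norm_sum _ _ _)).
by apply: ler_sum => j _; rewrite normrM !norm_coef_exp_poly.
Qed.

Lemma size_exp_poly_defect N (x y : R) : (size (exp_poly_defect N x y) <= N + N)%N.
Proof.
apply: (leq_trans (size_polyD _ _)); rewrite geq_max size_polyN.
rewrite (leq_trans (size_poly _ _)) ?leq_addr // andbT.
apply: (leq_trans (size_polyMleq _ _)); apply: (leq_trans (leq_pred _)).
by apply: leq_add; apply: size_poly.
Qed.

Lemma horner_exp_poly N (x b : R) :
  (exp_poly N x).[b] = series (exp_coeff (x * b)) N.
Proof.
rewrite (horner_coef_wide _ (size_poly _ _)) /series /= big_mkord.
by apply: eq_bigr => k _; rewrite coef_poly ltn_ord /exp_coeff /= exprMn mulrAC.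
Qed.

Lemma cvg_horner_exp_poly_defect (x y b : R) :
  (fun N => (exp_poly_defect N x y).[b]) @ \oo --> 0.
Proof.
have -> : (0 : R) = expR (x * b) * expR (y * b) - expR ((x + y) * b).
  by rewrite mulrDl expRD subrr.
under eq_fun do rewrite /exp_poly_defect !hornerE !horner_exp_poly.
by apply: cvgB; first apply: cvgM; apply: is_cvg_series_exp_coeff.
Qed.

Section HornerMx.
Variables (n : nat) (M : 'M[R]_n.+1).

Lemma horner_mx_coef_wide {q : {poly R}} {K : nat} :
  (size q <= K)%N -> horner_mx M q = \sum_(k < K) q`_k *: M ^+ k.
Proof.
move=> qK; have {1}-> : q = \poly_(k < K) q`_k.
  apply/polyP => k; rewrite coef_poly; case: ltnP => // Kk.
  by rewrite nth_default // (leq_trans qK Kk).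
rewrite poly_def linear_sum; apply: eq_bigr => k _.
by rewrite linearZ /= rmorphXn /= horner_mx_X.
Qed.

Lemma norm_horner_mx_le {q q' : {poly R}} {K : nat} i j :
  (size q <= K)%N -> (size q' <= K)%N -> (forall p, `|q`_p| <= q'`_p) ->
  `|horner_mx M q i j| <= q'.[mxnorm1 M].
Proof.
move=> qK q'K le_qq'.
rewrite (horner_mx_coef_wide qK) (horner_coef_wide _ q'K) summxE.
apply: (le_trans (ler_norm_sum _ _ _)); apply: ler_sum => k _.
by rewrite mxE normrM ler_pM // norm_mxexpr_le.
Qed.

Lemma horner_mx_exp_polyE N x i j :
  horner_mx M (exp_poly N x) i j = \sum_(0 <= k < N) (k`!%:R)^-1 * ((x *: M) ^+ k) i j.
Proof.
rewrite (horner_mx_coef_wide (size_poly _ _)) summxE big_mkord.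
apply: eq_bigr => k _; rewrite coef_poly ltn_ord exprZn !mxE.
by rewrite mulrAC mulrC.
Qed.

Lemma cvg_horner_mx_exp_poly x i j :
  (fun N => horner_mx M (exp_poly N x) i j) @ \oo --> mxexp (x *: M) i j.
Proof.
rewrite mxE; under eq_fun do rewrite horner_mx_exp_polyE.
exact: is_cvg_mxexp_series.
Qed.

Lemma horner_mx_exp_poly0 N : (0 < N)%N -> horner_mx M (exp_poly N 0) = 1.
Proof.
case: N => // N _; rewrite (horner_mx_coef_wide (size_poly _ _)) big_ord_recl.
rewrite big1 => [|k _]; last by rewrite coef_poly ltn_ord expr0n mul0r scale0r.
by rewrite addr0 coef_poly expr0 fact0 divr1 scale1r.
Qed.

(* The defect exp_N(M) exp_N(-M) - 1 is bounded entrywise by the defect of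
   exp_N(b)^2 - exp_N(2b) for b = mxnorm1 M, which tends to 0. *)
Lemma cvg_horner_mx_exp_polyMN i j :
  (fun N => horner_mx M (exp_poly N 1 * exp_poly N (-1)) i j) @ \oo
    --> (1%:M : 'M[R]_n.+1) i j.
Proof.
apply/subr_cvg0; apply: norm_cvg0.
apply: (@squeeze_cvgr _ _ _ _ (cst 0) (fun N => (exp_poly_defect N 1 1).[mxnorm1 M])).
- near=> N.
  have N_gt0 : (0 < N)%N by near: N; exists 1%N.
  have := @norm_coef_exp_poly_defect_le N 1 (-1); rewrite normrN normr1 => le_coef.
  have := norm_horner_mx_le i j (size_exp_poly_defect N 1 (-1))
    (size_exp_poly_defect N 1 1) le_coef.
  by rewrite normr_ge0 rmorphB /= subrr horner_mx_exp_poly0 // !mxE.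
- exact: cvg_cst.
- exact: cvg_horner_exp_poly_defect.
Unshelve. all: by end_near.
Qed.

End HornerMx.

Lemma mulmx_mxexpN n (M : 'M[R]_n) : mxexp M *m mxexp (- M) = 1%:M.
Proof.
case: n M => [|n] M; first by apply/matrixP => -[].
apply/matrixP => i j.
have cvg_prod : (fun N => horner_mx M (exp_poly N 1 * exp_poly N (-1)) i j) @ \oo
                --> (mxexp M *m mxexp (- M)) i j.
  under eq_fun do rewrite rmorphM /= -mulmxE mxE.
  rewrite mxE; apply: cvg_sum_fin => l; apply: cvgM.
  - by have := cvg_horner_mx_exp_poly n M 1 i l; rewrite scale1r.
  - by have := cvg_horner_mx_exp_poly n M (-1) l j; rewrite scaleN1r.
by rewrite -(cvg_lim _ cvg_prod) // (cvg_lim _ (cvg_horner_mx_exp_polyMN n M i j)).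
Qed.

Lemma trmxX n (M : 'M[R]_n) k : (M ^+ k)^T = M^T ^+ k.
Proof.
elim: k => [|k IHk]; first by rewrite !expr0 trmx1.
by rewrite exprS -mulmxE trmx_mul IHk mulmxE -exprSr.
Qed.

Lemma trmx_mxexp n (M : 'M[R]_n) : (mxexp M)^T = mxexp M^T.
Proof.
apply/matrixP => i j; rewrite !mxE; congr (lim (_ @ \oo)); apply/funext => N.
by apply: eq_bigr => k _; rewrite -trmxX mxE.
Qed.

Lemma sumr_mxexprS_row n (M : 'M[R]_n) i k :
  (forall l, \sum_j M l j = 0) -> \sum_j (M ^+ k.+1) i j = 0.
Proof.
move=> M_row0; under eq_bigr do rewrite exprSr -mulmxE mxE.
by rewrite exchange_big /= big1 // => l _; rewrite -mulr_sumr M_row0 mulr0.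
Qed.

Lemma sumr_mxexp_row n (M : 'M[R]_n) i :
  (forall l, \sum_j M l j = 0) -> \sum_j mxexp M i j = 1.
Proof.
move=> M_row0.
have partial_cvg j : series (fun k => (k`!%:R)^-1 * (M ^+ k) i j) @ \oo --> mxexp M i j.
  by rewrite mxE; apply: is_cvg_mxexp_series.
rewrite -(cvg_lim _ (cvg_sum_fin partial_cvg)) //; apply: cvg_lim => //.
apply: cvg_near_cst; near=> N.
have N_gt0 : (0 < N)%N by near: N; exists 1%N.
rewrite /series /= exchange_big -(prednK N_gt0) big_nat_recl //=.
rewrite [X in _ + X]big1 => [|k _]; last by rewrite -mulr_sumr sumr_mxexprS_row // mulr0.
rewrite addr0 fact0 mulr1n invr1 expr0.
rewrite (bigD1 i) //= big1 => [|j /negbTE ji].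
  by rewrite mul1r mxE eqxx addr0.
by rewrite mxE eq_sym ji mulr0.
Unshelve. all: by end_near.
Qed.

End MatrixExponential.

Lemma sumr_flat {R : realDomainType} {n} {f : 'I_n -> R} {c : R} :
  (forall j, `|f j| = c) -> \sum_j f j = (2 * #|[pred j | 0 <= f j]|%:R - n%:R) * c.
Proof.
move=> f_norm; rewrite (bigID [pred j | 0 <= f j]) /=.
rewrite (eq_bigr (fun=> c)) => [|j fj_ge0]; last by rewrite -(f_norm j) ger0_norm.
rewrite [X in _ + X](eq_bigr (fun=> - c)) => [|j]; last first.
  by rewrite -ltNge => fj_lt0; rewrite -(f_norm j) ltr0_norm ?opprK.
rewrite !sumr_const; have := cardC [pred j | 0 <= f j]; rewrite card_ord.
move: #|[pred j | 0 <= f j]| #|[predC [pred j | 0 <= f j]]| => p q <-.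
by rewrite natrD; ring.
Qed.

Lemma flat_orthogonal_mx_even_sqr {R : realFieldType} {n} {U : 'M[R]_n} (c : R) :
  (1 < n)%N -> (forall i j, `|U i j| = c) -> U *m U^T = 1%:M ->
  (forall i, \sum_j U i j = 1) -> ~~ odd n /\ exists m, n = (m ^ 2)%N.
Proof.
move=> n_gt1 U_flat UUT U_row1.
have dot i k : \sum_j U i j * U k j = (i == k)%:R.
  have := congr1 (fun A : 'M[R]_n => A i k) UUT; rewrite /= !mxE => <-.
  by apply: eq_bigr => j _; rewrite mxE.
pose i0 : 'I_n := Ordinal (ltnW n_gt1); pose i1 : 'I_n := Ordinal n_gt1.
have nc2 : n%:R * c ^+ 2 = 1.
  transitivity (\sum_j U i0 j * U i0 j); last by rewrite dot eqxx.
  rewrite mulr_natl -[n in _ *+ n]card_ord -sumr_const; apply: eq_bigr => j _.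
  by rewrite -(U_flat i0 j) real_normK ?num_real // expr2.
have c2_neq0 : c ^+ 2 != 0.
  by apply/eqP => c2_0; move: nc2; rewrite c2_0 mulr0 => /eqP; rewrite eq_sym oner_eq0.
split.
  have := dot i0 i1; rewrite (@sumr_flat _ _ _ (c ^+ 2)) => [|j]; last first.
    by rewrite normrM !U_flat expr2.
  move=> /eqP; rewrite mulf_eq0 (negbTE c2_neq0) orbF subr_eq0 -natrM eqr_nat.
  by move=> /eqP <-; rewrite oddM.
have := U_row1 i0; rewrite (sumr_flat (U_flat i0)); set p := #|_| => d_c.
pose d : int := 2 * p%:Z - n%:Z; exists `|d|%N.
have d_sqr : d ^+ 2 = n%:Z.
  apply: (@intr_inj R); apply: (mulIf c2_neq0).
  by rewrite rmorphXn rmorphB rmorphM /= -exprMn !pmulrn d_c expr1n nc2.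
by rewrite -abszX d_sqr absz_nat.
Qed.

Lemma trmx_skew_adj (R : realType) (gT : finGroupType) (C : {set gT}) :
  (skew_adj R C)^T = - skew_adj R C.
Proof. by apply/matrixP => i j; rewrite !mxE opprB. Qed.

Lemma sumr_skew_adj_row (R : realType) (gT : finGroupType) (C : {set gT}) i :
  \sum_j skew_adj R C i j = 0.
Proof.
under eq_bigr do rewrite mxE.
rewrite sumrB; apply/eqP; rewrite subr_eq0; apply/eqP.
set a := enum_val i.
rewrite -(big_enum_val (fun x => ((x * a^-1)%g \in C)%:R)).
rewrite -(big_enum_val (fun x => ((a * x^-1)%g \in C)%:R)).
have invMa_inj : injective (fun x : gT => (x^-1 * a)%g) by move=> x y /mulIg /invg_inj.
rewrite (reindex_inj (mulIg a)) [RHS](reindex_inj invMa_inj) /=.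
by apply: eq_bigr => x _; rewrite mulgK invMg invgK mulgA mulgV mul1g.
Qed.

Theorem lemma10p3 (R : realType) (gT : finGroupType) (C : {set gT}) :
  (2 < #|gT|)%N ->
  oriented_connection_set C ->
  (exists t : R, uniform_mixing_at C t) ->
  ~~ odd #|gT| /\ exists m : nat, #|gT| = (m ^ 2)%N.
Proof.
move=> n_gt2 _ [t mixing].
set M := (- t) *: skew_adj R C.
have UUT : transition C t *m (transition C t)^T = 1%:M.
  have MT : M^T = - M by rewrite linearZ /= trmx_skew_adj scalerN.
  by rewrite /transition -/M trmx_mxexp MT mulmx_mxexpN.
have U_row1 i : \sum_j transition C t i j = 1.
  apply: sumr_mxexp_row => l; under eq_bigr do rewrite mxE.
  by rewrite -mulr_sumr sumr_skew_adj_row mulr0.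
pose x0 := Ordinal (ltnW (ltnW n_gt2)).
apply: (flat_orthogonal_mx_even_sqr `|transition C t x0 x0| (ltnW n_gt2) _ UUT U_row1).
by move=> i j; apply: mixing.
Qed.
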